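(* Let $G$ be a countable infinite graph whose maximum degree $\Delta(G)$ is finite. Then $G$ has a proper $k$-total difference labeling for some positive integer $k$ (so $\chi_{td}(G)$ is defined). Moreover, if $M$ is the largest element of a minimal well-spaced row with $\Delta(G)^2+1$ elements, then $\chi_{td}(G)\leq M$.
   Context: For a (possibly infinite) simple graph $G$ and a positive integer $k$, a proper $k$-total difference labeling of $G$ is a function $f: V(G)\to\{1,\dots,k\}$, extended to edges by $f(\{u,v\}) = |f(u)-f(v)|$, such that: (i) adjacent vertices receive different labels; (ii) two distinct edges sharing a vertex receive different labels; (iii) no edge receives the same label as either of its endpoints. $\chi_{td}(G)$ denotes the smallest $k$ for which such a labeling exists. A well-spaced row is a finite set of positive integers such that no element is twice another element and no three distinct elements form an arithmetic progression. A minimal well-spaced row with $m$ elements is a well-spaced row of cardinality $m$ whose maximum element is as small as possible among all well-spaced rows of cardinality $m$. *)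

From mathcomp Require Import all_boot.
Set Implicit Arguments. Unset Strict Implicit. Unset Printing Implicit Defensive.

Definition simple_graph (V : Type) (adj : rel V) : Prop :=
  (forall u v, adj u v = adj v u) /\ (forall v, ~~ adj v v).

Definition infinite_type (V : Type) : Prop :=
  exists g : nat -> V, injective g.

Definition degree_bound (V : eqType) (adj : rel V) (D : nat) : Prop :=
  forall v (s : seq V), uniq s -> all (adj v) s -> size s <= D.

Definition max_degree (V : eqType) (adj : rel V) (Delta : nat) : Prop :=
  degree_bound adj Delta /\ (forall D, degree_bound adj D -> Delta <= D).

Definition absdiff (a b : nat) : nat := (a - b) + (b - a).

Definition proper_total_diff_labeling (V : eqType) (adj : rel V) (k : nat)
    (f : V -> nat) : Prop :=
  [/\ forall v, 1 <= f v <= k,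
      forall u v, adj u v -> f u != f v,
      forall v u w, adj v u -> adj v w -> u != w ->
        absdiff (f v) (f u) != absdiff (f v) (f w)
    & forall u v, adj u v ->
        (absdiff (f u) (f v) != f u) && (absdiff (f u) (f v) != f v)].

Definition has_td_labeling (V : eqType) (adj : rel V) (k : nat) : Prop :=
  0 < k /\ exists f : V -> nat, proper_total_diff_labeling adj k f.

Definition is_chi_td (V : eqType) (adj : rel V) (k : nat) : Prop :=
  has_td_labeling adj k /\ (forall k', has_td_labeling adj k' -> k <= k').

Definition well_spaced (s : seq nat) : Prop :=
  [/\ uniq s, forall a, a \in s -> 0 < a,
      forall a b, a \in s -> b \in s -> a != b.*2
    & forall a b c, a \in s -> b \in s -> c \in s ->
        a != b -> b != c -> a != c -> a + c != b.*2].

Definition max_elt (s : seq nat) : nat := \max_(x <- s) x.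

Definition minimal_well_spaced (m : nat) (s : seq nat) : Prop :=
  [/\ well_spaced s, size s = m
    & forall t, well_spaced t -> size t = m -> max_elt s <= max_elt t].

From mathcomp Require Import all_boot zify boolp.
Set Implicit Arguments. Unset Strict Implicit. Unset Printing Implicit Defensive.

(* Every vertex has at most Delta^2 vertices at distance 1 or 2, so colouring
   the square of G greedily along an enumeration of the countable vertex set
   uses at most Delta^2 + 1 colours.  Relabel colour i by the i-th element of a
   well-spaced row s: vertices at distance at most 2 then get distinct labels;
   two equal edge labels |a - b| = |a - c| at a vertex a would make b, a, c an
   arithmetic progression, and an edge label equal to an endpoint would make
   one endpoint twice the other.  Rows of every size exist (powers of 3), so
   chi_td is defined, and it is at most max s. *)

Section GreedyColouring.

Variables (T : countType) (R : T -> T -> Prop) (d : nat).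
Hypothesis R_sym : forall u v, R u v -> R v u.
Hypothesis R_deg : forall v (s : seq T),
  uniq s -> (forall u, u \in s -> u != v /\ R u v) -> size s <= d.

Definition enum_below n : seq T := pmap (@pickle_inv T) (iota 0 n).

Lemma mem_enum_below n u : (u \in enum_below n) = (pickle u < n).
Proof. by rewrite (can2_mem_pmap (@pickle_invK T) (@pickleK_inv T)) mem_iota. Qed.

Lemma enum_below_uniq n : uniq (enum_below n).
Proof. exact/(pmap_uniq (@pickle_invK T))/iota_uniq. Qed.

(* [cols] holds the colours of the vertices of index [< size cols]. *)
Definition free_colour (cols : seq nat) (v : T) (c : nat) : bool :=
  all (fun u => `[< R u v >] ==> (nth 0 cols (pickle u) != c))
    (enum_below (size cols)).

Definition next_colour (cols : seq nat) : nat :=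
  if @pickle_inv T (size cols) is Some v
  then find (free_colour cols v) (iota 0 d.+1) else 0.

Definition greedy n : seq nat :=
  iter n (fun cols => rcons cols (next_colour cols)) [::].

Definition greedy_colour (v : T) : nat :=
  find (free_colour (greedy (pickle v)) v) (iota 0 d.+1).

Lemma size_greedy n : size (greedy n) = n.
Proof. by elim: n => //= n IHn; rewrite size_rcons IHn. Qed.

Lemma nth_greedy_pickle n u :
  pickle u < n -> nth 0 (greedy n) (pickle u) = greedy_colour u.
Proof.
elim: n => // n IHn; rewrite ltnS leq_eqVlt => /orP[/eqP <-|lt_un] /=.
  by rewrite nth_rcons size_greedy ltnn eqxx /next_colour size_greedy pickleK_inv.
by rewrite nth_rcons size_greedy lt_un IHn.
Qed.

Lemma has_free_colour cols v :
  size cols <= pickle v -> has (free_colour cols v) (iota 0 d.+1).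
Proof.
move=> le_cols_v; apply/negPn/negP => /hasPn no_free.
set L := [seq u <- enum_below (size cols) | `[< R u v >]].
have : size (iota 0 d.+1) <= size [seq nth 0 cols (pickle u) | u <- L].
  apply: uniq_leq_size (iota_uniq _ _) _ => c /no_free /allPn[u u_below].
  rewrite negb_imply negbK => /andP[Ruv /eqP <-].
  by apply: map_f; rewrite mem_filter Ruv.
rewrite size_iota size_map ltnNge => /negP; apply; apply: (@R_deg v).
  exact: filter_uniq (enum_below_uniq _).
move=> u; rewrite mem_filter mem_enum_below => /andP[/asboolP Ruv lt_u].
by split=> //; apply: contraTneq le_cols_v => <-; rewrite -ltnNge.
Qed.

Lemma greedy_colour_lt v : greedy_colour v < d.+1.
Proof.
have := has_free_colour (eq_leq (size_greedy (pickle v))).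
by rewrite has_find size_iota.
Qed.

Lemma greedy_colour_free v :
  free_colour (greedy (pickle v)) v (greedy_colour v).
Proof.
have := nth_find 0 (has_free_colour (eq_leq (size_greedy (pickle v)))).
by rewrite nth_iota ?greedy_colour_lt.
Qed.

Lemma greedy_colour_proper u v :
  u != v -> R u v -> greedy_colour u != greedy_colour v.
Proof.
wlog lt_uv : u v / pickle u < pickle v.
  move=> wlog_lt neq_uv Ruv.
  have : pickle u != pickle v.
    by apply: contra neq_uv => /eqP/(pcan_inj (@pickleK T))->.
  rewrite neq_ltn => /orP[lt_uv|lt_vu]; first exact: wlog_lt.
  by rewrite eq_sym wlog_lt 1?eq_sym //; apply: R_sym.
move=> _ Ruv; have /allP/(_ u) := greedy_colour_free v.
rewrite mem_enum_below size_greedy nth_greedy_pickle // => /(_ lt_uv).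
by move/implyP; apply; apply/asboolP.
Qed.

Lemma countable_greedy_colouring :
  exists c : T -> 'I_d.+1, forall u v, u != v -> R u v -> c u != c v.
Proof.
exists (fun v => Ordinal (greedy_colour_lt v)) => u v.
exact: greedy_colour_proper.
Qed.

End GreedyColouring.

Definition dist_le2 (V : Type) (adj : rel V) (u v : V) : Prop :=
  adj u v \/ exists2 w, adj u w & adj w v.

Lemma dist_le2_sym (V : Type) (adj : rel V) :
  simple_graph adj -> forall u v, dist_le2 adj u v -> dist_le2 adj v u.
Proof.
move=> [adj_sym _] u v [adj_uv | [w adj_uw adj_wv]].
  by left; rewrite adj_sym.
by right; exists w; rewrite adj_sym.
Qed.

Lemma degree_bound_neighbourhood (V : eqType) (adj : rel V) D v :
  degree_bound adj D -> exists N : seq V, uniq N /\ forall w, (w \in N) = adj v w.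
Proof.
move=> deg_D; apply: contrapT => no_nbhd.
have grow k : exists N, [/\ uniq N, all (adj v) N & size N = k].
  elim: k => [|k [N [uniq_N adj_N size_N]]]; first by exists [::].
  have [w w_notin adj_vw] : exists2 w, w \notin N & adj v w.
    apply: contrapT => no_w; apply: no_nbhd; exists N; split=> // x.
    apply/idP/idP => [/(allP adj_N) // | adj_vx].
    by apply/negPn/negP => x_notin; apply: no_w; exists x.
  by exists (w :: N); rewrite /= w_notin uniq_N adj_vw adj_N size_N.
have [N [uniq_N adj_N size_N]] := grow D.+1.
by have := deg_D v N uniq_N adj_N; rewrite size_N ltnn.
Qed.

Lemma size_le_cover (T I : Type) (P : I -> pred T) (N : seq I) (L : seq T) D :
  all (fun u => has (P^~ u) N) L -> all (fun w => count (P w) L <= D) N ->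
  size L <= size N * D.
Proof.
elim: N L => [|w N IHN] L /= covered; first by case: L covered.
case/andP=> count_w counts.
rewrite mulSn -(count_predC (P w) L) leq_add // -size_filter; apply: IHN.
  by rewrite all_filter; apply: sub_all covered => u /=; case: (P w u).
apply: sub_all counts => w' /= count_w'; rewrite count_filter.
by apply: leq_trans count_w'; apply: sub_count => u /andP[].
Qed.

Lemma count_star_le (V : eqType) (adj : rel V) D v w (L : seq V) :
  simple_graph adj -> degree_bound adj D -> adj v w -> uniq L ->
  count (predU (pred1 w) [pred u | adj w u && (u != v)]) L <= D.
Proof.
move=> [adj_sym _] deg_D adj_vw uniq_L.
have far_le : (count [pred u | adj w u && (u != v)] L).+1 <= D.
  rewrite -size_filter; apply: (deg_D w (v :: _)).
    by rewrite /= mem_filter /= eqxx andbF filter_uniq.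
  rewrite /= adj_sym adj_vw; apply/allP => u; rewrite mem_filter.
  by case/andP=> /andP[].
have w_le : count (pred1 w) L <= 1 by rewrite count_uniq_mem ?leq_b1.
have := count_predUI (pred1 w) [pred u | adj w u && (u != v)] L.
by move: far_le; lia.
Qed.

Lemma dist_le2_size_le (V : eqType) (adj : rel V) D :
  simple_graph adj -> degree_bound adj D -> forall v (s : seq V), uniq s ->
  (forall u, u \in s -> u != v /\ dist_le2 adj u v) -> size s <= D ^ 2.
Proof.
move=> adj_simple deg_D v s uniq_s near_s; have [adj_sym _] := adj_simple.
have [N [uniq_N mem_N]] := degree_bound_neighbourhood v deg_D.
have adj_N : all (adj v) N by apply/allP => w; rewrite mem_N.
rewrite -mulnn; apply: leq_trans (leq_mul (deg_D v N uniq_N adj_N) (leqnn D)).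
apply: (@size_le_cover _ _ (fun w => predU (pred1 w) [pred u | adj w u && (u != v)])).
  apply/allP => u /near_s[neq_uv [adj_uv | [w adj_uw adj_wv]]]; apply/hasP.
    by exists u; rewrite ?mem_N 1?adj_sym //= eqxx.
  by exists w; rewrite ?mem_N 1?adj_sym //= adj_sym adj_uw neq_uv orbT.
by apply/allP => w; rewrite mem_N => adj_vw; apply: count_star_le.
Qed.

Lemma absdiff_neq a b c :
  b != c -> b + c != a.*2 -> absdiff a b != absdiff a c.
Proof. rewrite /absdiff -addnn; lia. Qed.

Lemma absdiff_neq_ends a b :
  0 < a -> 0 < b -> a != b.*2 -> b != a.*2 ->
  (absdiff a b != a) && (absdiff a b != b).
Proof. rewrite /absdiff -!addnn; lia. Qed.

Lemma row_labeling (V : eqType) (adj : rel V) n (c : V -> 'I_n) (s : seq nat) :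
  simple_graph adj -> (forall u v, u != v -> dist_le2 adj u v -> c u != c v) ->
  well_spaced s -> size s = n ->
  proper_total_diff_labeling adj (max_elt s) (fun v => nth 0 s (c v)).
Proof.
move=> [adj_sym adj_irr] c_proper [uniq_s pos_s no_double no_ap] size_s.
set f := fun v => _.
have f_in v : f v \in s by apply/mem_nth; rewrite size_s.
have f_neq u v : u != v -> dist_le2 adj u v -> f u != f v.
  by move=> neq_uv near_uv; rewrite nth_uniq ?size_s //; apply: c_proper.
have f_adj u v : adj u v -> f u != f v.
  move=> adj_uv; apply: f_neq; last by left.
  by apply: contraTneq adj_uv => ->; apply: adj_irr.
split.
- by move=> v; rewrite pos_s ?f_in //=; apply: leq_bigmax_seq (f_in v) _.
- exact: f_adj.
- move=> v u w adj_vu adj_vw neq_uw.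
  have neq_fuw : f u != f w.
    by apply: f_neq neq_uw _; right; exists v; rewrite // adj_sym.
  have [neq_fvu neq_fvw] := (f_adj v u adj_vu, f_adj v w adj_vw).
  apply: (absdiff_neq neq_fuw).
  by apply: no_ap (f_in u) (f_in v) (f_in w) _ neq_fvw neq_fuw; rewrite eq_sym.
- move=> u v adj_uv.
  by apply: absdiff_neq_ends; rewrite ?pos_s ?no_double ?f_in.
Qed.

Lemma max_elt_gt0 s : well_spaced s -> 0 < size s -> 0 < max_elt s.
Proof.
case: s => // a s [_ pos_s _ _] _.
exact: leq_trans (pos_s a (mem_head _ _)) (leq_bigmax_seq _ (mem_head _ _) _).
Qed.

Lemma well_spaced_pow3 K : well_spaced [seq 3 ^ i | i <- iota 0 K].
Proof.
set s := [seq _ | i <- _].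
have pos_s a : a \in s -> 0 < a by case/mapP => i _ ->; rewrite expn_gt0.
have sparse a b : a \in s -> b \in s -> a < b -> 3 * a <= b.
  by move=> /mapP[i _ ->] /mapP[j _ ->]; rewrite ltn_exp2l // -expnS leq_exp2l.
split=> [||a b a_s b_s|a b c a_s b_s c_s].
- by rewrite map_inj_uniq ?iota_uniq //; apply: expnI.
- exact: pos_s.
- move: (sparse _ _ a_s b_s) (sparse _ _ b_s a_s) (pos_s _ a_s).
  by rewrite -addnn; lia.
- move: (sparse _ _ a_s b_s) (sparse _ _ b_s a_s) (sparse _ _ c_s b_s).
  move: (sparse _ _ b_s c_s) (pos_s _ a_s) (pos_s _ c_s).
  by rewrite -addnn; lia.
Qed.

Lemma exists_least_nat (P : nat -> Prop) :
  (exists k, P k) -> exists k, P k /\ forall k', P k' -> k <= k'.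
Proof.
move=> [k Pk]; have exP : exists k, `[< P k >] by exists k; apply/asboolP.
case: (ex_minnP exP) => m /asboolP Pm m_least.
by exists m; split=> // k' /asboolP; apply: m_least.
Qed.

Theorem mainTheorem7 (V : countType) (adj : rel V) (Delta : nat) :
  simple_graph adj -> infinite_type V -> max_degree adj Delta ->
  (exists k, has_td_labeling adj k) /\
  (forall s : seq nat, minimal_well_spaced (Delta ^ 2 + 1) s ->
     exists k, is_chi_td adj k /\ k <= max_elt s).
Proof.
move=> adj_simple _ [deg_Delta _].
have [c c_proper] := countable_greedy_colouring (dist_le2_sym adj_simple)
                       (dist_le2_size_le adj_simple deg_Delta).
have labeling s : well_spaced s -> size s = Delta ^ 2 + 1 ->
    has_td_labeling adj (max_elt s).
  move=> ws size_s; rewrite addn1 in size_s.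
  split; first by rewrite max_elt_gt0 ?size_s.
  by eexists; apply: row_labeling c_proper ws size_s.
have ex_labeling : exists k, has_td_labeling adj k.
  by eexists; apply: labeling (well_spaced_pow3 _) _; rewrite size_map size_iota.
split=> // s [ws size_s _].
have [k [k_labels k_least]] := exists_least_nat ex_labeling.
by exists k; split=> //; apply/k_least/labeling.
Qed.
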